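(* Let $n\ge2$ and $\mu\in[0,1-\frac1n]$. Then problems (P) and (RP) have the same optimal solutions: an $n\times n$ matrix is an optimal solution of (P) if and only if it is an optimal solution of (RP).
   Context: An $n\times n$ checkerboard copula is a real $n\times n$ matrix $P=(p_{ij})$ with nonnegative entries whose row and column sums all equal $\frac1n$. $\Xi=(\xi_{ij})$ with $\xi_{ij}=1$ if $i=j$, $2$ if $i>j$, $0$ if $i<j$. Let $I(P)=\sum_{i,j}p_{ij}\log p_{ij}$ with $0\log0=0$. Problem (P): minimize $I(P)$ over $n\times n$ checkerboard copulas $P$ with $1-\mathrm{tr}(\Xi P\Xi P^\top)=\mu$. Problem (RP): minimize $I(P)$ over $n\times n$ checkerboard copulas $P$ with $1-\mathrm{tr}(\Xi P\Xi P^\top)\ge\mu$. *)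

From mathcomp Require Import all_boot all_order all_algebra.
From mathcomp Require Import reals exp.
Set Implicit Arguments. Unset Strict Implicit. Unset Printing Implicit Defensive.
Import Order.TTheory GRing.Theory Num.Theory.
Local Open Scope ring_scope.

Section Defs.
Variable R : realType.

(* n x n checkerboard copula: nonnegative entries, all row and column sums 1/n *)
Definition checkerboard (n : nat) (P : 'M[R]_n) : Prop :=
  (forall i j, 0 <= P i j) /\
  (forall i, \sum_(j < n) P i j = n%:R^-1) /\
  (forall j, \sum_(i < n) P i j = n%:R^-1).

Definition Xi (n : nat) : 'M[R]_n :=
  \matrix_(i < n, j < n) (if i == j then 1 else if (j < i)%N then 2 else 0).

Definition xlogx (x : R) : R := if x == 0 then 0 else x * ln x.

Definition Ient (n : nat) (P : 'M[R]_n) : R :=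
  \sum_(i < n) \sum_(j < n) xlogx (P i j).

Definition constr (n : nat) (P : 'M[R]_n) : R :=
  1 - \tr (Xi n *m P *m Xi n *m P^T).

Definition feasible_P (n : nat) (mu : R) (P : 'M[R]_n) : Prop :=
  checkerboard P /\ constr P = mu.

Definition feasible_RP (n : nat) (mu : R) (P : 'M[R]_n) : Prop :=
  checkerboard P /\ constr P >= mu.

Definition optimal_P (n : nat) (mu : R) (P : 'M[R]_n) : Prop :=
  feasible_P mu P /\ forall Q : 'M[R]_n, feasible_P mu Q -> Ient P <= Ient Q.

Definition optimal_RP (n : nat) (mu : R) (P : 'M[R]_n) : Prop :=
  feasible_RP mu P /\ forall Q : 'M[R]_n, feasible_RP mu Q -> Ient P <= Ient Q.

End Defs.

From mathcomp Require Import all_boot all_order all_algebra.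
From mathcomp Require Import reals exp.
From mathcomp Require Import boolp classical_sets topology normedtype derive.
From mathcomp Require Import ring lra.
Import numFieldTopology.Exports numFieldNormedType.Exports.
Set Implicit Arguments. Unset Strict Implicit.
Import Order.TTheory GRing.Theory Num.Theory.
Local Open Scope ring_scope.

(* The independence copula Pi, with all entries 1/n^2, has constraint value 0
   and is the unique minimiser of the strictly convex entropy I among
   checkerboard copulas.  So if 0 <= mu < constr Q, some mixture
   (1-t) Q + t Pi with 0 < t <= 1 has constraint value exactly mu (t |-> constr
   is a quadratic polynomial, apply the intermediate value theorem) and
   entropy at most I(Q), strictly less when Q <> Pi.  The first bound shows
   that an optimum of (P) beats every feasible point of (RP); the second
   shows that an optimum of (RP) satisfies the constraint with equality. *)

Section EntropyDensity.
Variable R : realType.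

Lemma xlogx0 : xlogx (0 : R) = 0.
Proof. by rewrite /xlogx eqxx. Qed.

Lemma xlogxE (x : R) : 0 < x -> xlogx x = x * ln x.
Proof. by move=> x_gt0; rewrite /xlogx gt_eqF. Qed.

Lemma ln_lt_subr1 (y : R) : 0 < y -> y != 1 -> ln y < y - 1.
Proof.
move=> y_gt0 y_neq1.
have ln_neq0 : ln y != 0.
  by apply: contraNneq y_neq1 => ln0; rewrite -(lnK y_gt0) ln0 expR0.
by have := expR_gt1Dx ln_neq0; rewrite lnK ?posrE //; lra.
Qed.

Lemma xlogx_tangent_lt (a b : R) : 0 <= a -> 0 < b -> a != b ->
  xlogx b + (1 + ln b) * (a - b) < xlogx a.
Proof.
move=> a_ge0 b_gt0 ab; rewrite (xlogxE b_gt0).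
have [->|a_neq0] := eqVneq a 0; first by rewrite xlogx0; lra.
have a_gt0 : 0 < a by rewrite lt_neqAle eq_sym a_neq0.
have ba_gt0 : 0 < b / a by rewrite divr_gt0.
have ba_neq1 : b / a != 1.
  by apply: contra_neq ab => /(canRL (divfK a_neq0)); rewrite mul1r.
have := ln_lt_subr1 ba_gt0 ba_neq1.
rewrite lnM ?posrE ?invr_gt0 // lnV ?posrE // (xlogxE a_gt0) => ln_lt.
have : a * (ln b - ln a) < a * (b / a - 1) by rewrite ltr_pM2l.
have -> : a * (b / a - 1) = b - a by field.
nra.
Qed.

Lemma xlogx_tangent_le (a b : R) : 0 <= a -> 0 < b ->
  xlogx b + (1 + ln b) * (a - b) <= xlogx a.
Proof.
move=> a_ge0 b_gt0; have [->|ab] := eqVneq a b.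
  by rewrite subrr mulr0 addr0.
exact/ltW/xlogx_tangent_lt.
Qed.

Lemma xlogx_convex (a b t : R) : 0 <= a -> 0 < b -> 0 <= t <= 1 ->
  xlogx ((1 - t) * a + t * b) <= (1 - t) * xlogx a + t * xlogx b.
Proof.
move=> a_ge0 b_gt0 /andP[t_ge0 t_le1].
have [->|t_neq0] := eqVneq t 0; first by rewrite !(subr0, mul1r, mul0r, addr0).
have t_gt0 : 0 < t by rewrite lt_neqAle eq_sym t_neq0.
set m := (1 - t) * a + t * b.
have m_gt0 : 0 < m by rewrite /m; nra.
have t_le1' : 0 <= 1 - t by rewrite subr_ge0.
have ta := ler_wpM2l t_le1' (xlogx_tangent_le a_ge0 m_gt0).
have tb := ler_wpM2l t_ge0 (xlogx_tangent_le (ltW b_gt0) m_gt0).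
have sum_eq : (1 - t) * (xlogx m + (1 + ln m) * (a - m))
    + t * (xlogx m + (1 + ln m) * (b - m)) = xlogx m.
  by rewrite /m; ring.
lra.
Qed.

Lemma ltr_sum_sum m k (F G : 'I_m -> 'I_k -> R) i0 j0 :
  (forall i j, F i j <= G i j) -> F i0 j0 < G i0 j0 ->
  \sum_i \sum_j F i j < \sum_i \sum_j G i j.
Proof.
move=> leFG ltFG; rewrite (bigD1 i0) // [ltRHS](bigD1 i0) //=.
apply: ltr_leD; last by apply: ler_sum => i _; apply: ler_sum.
rewrite (bigD1 j0) // [ltRHS](bigD1 j0) //=.
by apply: ltr_leD => //; apply: ler_sum.
Qed.

End EntropyDensity.

Section IndependenceCopula.
Variables (R : realType) (n : nat).
Hypothesis n_gt0 : (0 < n)%N.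

Definition Pi : 'M[R]_n := const_mx (n%:R ^- 2).

Definition mix (t : R) (Q : 'M[R]_n) : 'M[R]_n := (1 - t) *: Q + t *: Pi.

Lemma natrn_neq0 : (n%:R : R) != 0.
Proof. by rewrite pnatr_eq0 -lt0n. Qed.

Lemma sumr_const_ord (c : R) : \sum_(i < n) c = n%:R * c.
Proof. by rewrite sumr_const card_ord mulr_natl. Qed.

Lemma sum_Pi_entry : \sum_(i < n) n%:R ^- 2 = n%:R^-1 :> R.
Proof. by rewrite sumr_const_ord; field; rewrite natrn_neq0. Qed.

Lemma checkerboard_Pi : checkerboard Pi.
Proof.
split; first by move=> i j; rewrite mxE invr_ge0 exprn_ge0 ?ler0n.
by split=> i; rewrite -sum_Pi_entry; apply: eq_bigr => j _; rewrite mxE.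
Qed.

Lemma checkerboard_mix (t : R) (Q : 'M[R]_n) :
  0 <= t <= 1 -> checkerboard Q -> checkerboard (mix t Q).
Proof.
move=> /andP[t_ge0 t_le1] [Q_ge0 [Q_row Q_col]].
have [Pi_ge0 _] := checkerboard_Pi.
split; first by move=> i j; have := Q_ge0 i j; have := Pi_ge0 i j; rewrite !mxE; nra.
split=> [i|j]; under eq_bigr do rewrite !mxE;
  by rewrite big_split /= -!mulr_sumr ?Q_row ?Q_col sum_Pi_entry; ring.
Qed.

Lemma checkerboard_sum (Q : 'M[R]_n) :
  checkerboard Q -> \sum_i \sum_j Q i j = 1.
Proof.
move=> [_ [Q_row _]]; under eq_bigr do rewrite Q_row.
by rewrite sumr_const_ord divff ?natrn_neq0.
Qed.

(* I(Pi) is the value at Q of the tangent plane of I at Pi. *)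
Lemma Ient_Pi_tangent (Q : 'M[R]_n) : checkerboard Q ->
  \sum_i \sum_j (xlogx (n%:R ^- 2) + (1 + ln (n%:R ^- 2)) * (Q i j - n%:R ^- 2))
  = Ient Pi.
Proof.
move=> cbQ; set p : R := n%:R ^- 2.
have mass0 : \sum_i \sum_j (Q i j - p) = 0.
  under eq_bigr do rewrite sumrB.
  rewrite sumrB checkerboard_sum // !sumr_const_ord /p.
  by field; rewrite natrn_neq0.
rewrite /Ient; under eq_bigr do rewrite big_split -mulr_sumr.
rewrite big_split /= -mulr_sumr mass0 mulr0 addr0.
by apply: eq_bigr => i _; apply: eq_bigr => j _; rewrite mxE.
Qed.

Lemma Ient_Pi_lt (Q : 'M[R]_n) : checkerboard Q -> Q != Pi -> Ient Pi < Ient Q.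
Proof.
move=> cbQ QPi; have [Q_ge0 _] := cbQ.
have p_gt0 : 0 < n%:R ^- 2 :> R by rewrite invr_gt0 exprn_gt0 ?ltr0n.
have /existsP[i0 /existsP[j0 Qij]] : [exists i, exists j, Q i j != Pi i j].
  apply: contraNT QPi; rewrite negb_exists => /forallP noDiff.
  apply/eqP/matrixP => i j; apply/eqP.
  by move: (noDiff i); rewrite negb_exists => /forallP /(_ j) /negPn.
rewrite -(Ient_Pi_tangent cbQ) /Ient; apply: (ltr_sum_sum (i0 := i0) (j0 := j0)) => [i j|].
  exact: xlogx_tangent_le.
by rewrite mxE in Qij; apply: xlogx_tangent_lt.
Qed.

Lemma Ient_Pi_le (Q : 'M[R]_n) : checkerboard Q -> Ient Pi <= Ient Q.
Proof.
move=> cbQ; have [->|QPi] := eqVneq Q Pi; first by [].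
exact/ltW/Ient_Pi_lt.
Qed.

Lemma Ient_mix_convex (t : R) (Q : 'M[R]_n) : 0 <= t <= 1 -> checkerboard Q ->
  Ient (mix t Q) <= (1 - t) * Ient Q + t * Ient Pi.
Proof.
move=> t01 [Q_ge0 _].
have p_gt0 : 0 < n%:R ^- 2 :> R by rewrite invr_gt0 exprn_gt0 ?ltr0n.
rewrite /Ient !mulr_sumr -big_split; apply: ler_sum => i _.
rewrite !mulr_sumr -big_split; apply: ler_sum => j _.
by rewrite !mxE; apply: xlogx_convex.
Qed.

Lemma Ient_mix_le (t : R) (Q : 'M[R]_n) : 0 <= t <= 1 -> checkerboard Q ->
  Ient (mix t Q) <= Ient Q.
Proof.
move=> t01 cbQ; have /andP[t_ge0 _] := t01.
have := Ient_mix_convex t01 cbQ; have := Ient_Pi_le cbQ; nra.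
Qed.

Lemma Ient_mix_lt (t : R) (Q : 'M[R]_n) : 0 < t <= 1 -> checkerboard Q ->
  Q != Pi -> Ient (mix t Q) < Ient Q.
Proof.
move=> /andP[t_gt0 t_le1] cbQ QPi.
have t01 : 0 <= t <= 1 by rewrite ltW.
have := Ient_mix_convex t01 cbQ; have := Ient_Pi_lt cbQ QPi; nra.
Qed.

Definition Xi_form (X Y : 'M[R]_n) : R := \tr (Xi R n *m X *m Xi R n *m Y^T).

Lemma Xi_formDl X Y Z : Xi_form (X + Y) Z = Xi_form X Z + Xi_form Y Z.
Proof. by rewrite /Xi_form mulmxDr !mulmxDl mxtraceD. Qed.

Lemma Xi_formDr X Y Z : Xi_form Z (X + Y) = Xi_form Z X + Xi_form Z Y.
Proof. by rewrite /Xi_form linearD /= mulmxDr mxtraceD. Qed.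

Lemma Xi_formZl a X Z : Xi_form (a *: X) Z = a * Xi_form X Z.
Proof. by rewrite /Xi_form -scalemxAr -!scalemxAl mxtraceZ. Qed.

Lemma Xi_formZr a X Z : Xi_form Z (a *: X) = a * Xi_form Z X.
Proof. by rewrite /Xi_form linearZ /= -scalemxAr mxtraceZ. Qed.

Lemma constr_mix_poly (Q : 'M[R]_n) :
  exists p : {poly R}, forall t, constr (mix t Q) = p.[t].
Proof.
set D := Pi - Q.
have mixE t : mix t Q = Q + t *: D.
  by rewrite /mix /D scalerBl scale1r scalerBr addrA addrAC.
exists ((1 - Xi_form Q Q)%:P - (Xi_form D Q + Xi_form Q D)%:P * 'X
        - (Xi_form D D)%:P * 'X ^+ 2).
move=> t; rewrite /constr mixE -/(Xi_form _ _).
rewrite !(Xi_formDl, Xi_formDr, Xi_formZl, Xi_formZr).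
by rewrite !(hornerD, hornerN, hornerM, hornerC, hornerX, hornerXn); ring.
Qed.

Lemma Xi_addC (i j : 'I_n) : Xi R n i j + Xi R n j i = 2.
Proof.
rewrite !mxE -!val_eqE /=.
by case: ltngtP => [ij|ji|ij]; rewrite ?(ltn_eqF ij, gtn_eqF ji); lra.
Qed.

Lemma sum_Xi : \sum_i \sum_j Xi R n i j = n%:R ^+ 2.
Proof.
have sym_sum : \sum_i \sum_j (Xi R n i j + Xi R n j i) = 2 * n%:R ^+ 2.
  under eq_bigr do under eq_bigr do rewrite Xi_addC.
  by rewrite !sumr_const_ord; ring.
move: sym_sum; under eq_bigr do rewrite big_split /=.
rewrite big_split /= [X in _ + X = _]exchange_big /=; lra.
Qed.

Lemma constr_Pi : constr Pi = 0.
Proof.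
set c : R := n%:R ^- 2.
pose r (i : 'I_n) := \sum_j Xi R n i j; pose s (j : 'I_n) := \sum_i Xi R n i j.
have XiPi i k : (Xi R n *m Pi) i k = c * r i.
  by rewrite mxE /r mulr_sumr; apply: eq_bigr => j _; rewrite [Pi _ _]mxE mulrC.
have XiPiXi i l : (Xi R n *m Pi *m Xi R n) i l = c * r i * s l.
  by rewrite mxE /s mulr_sumr; apply: eq_bigr => k _; rewrite XiPi.
have diagE i : (Xi R n *m Pi *m Xi R n *m Pi^T) i i = c * r i * (\sum_l s l) * c.
  by rewrite mxE mulr_sumr mulr_suml; apply: eq_bigr => l _; rewrite XiPiXi !mxE.
rewrite /constr /mxtrace; under eq_bigr do rewrite diagE.
have sum_s : \sum_l s l = n%:R ^+ 2 by rewrite /s exchange_big sum_Xi.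
rewrite sum_s -!mulr_suml -mulr_sumr sum_Xi /c.
by field; rewrite natrn_neq0.
Qed.

Lemma mix_constr_ivt (Q : 'M[R]_n) (mu : R) :
  checkerboard Q -> 0 <= mu -> mu < constr Q ->
  exists2 t, 0 < t <= 1 & feasible_P mu (mix t Q).
Proof.
move=> cbQ mu_ge0 mu_lt; have [p constrE] := constr_mix_poly Q.
have p0 : p.[0] = constr Q by rewrite -constrE /mix subr0 scale1r scale0r addr0.
have p1 : p.[1] = 0 by rewrite -constrE /mix subrr scale0r add0r scale1r constr_Pi.
have p_cont : {within `[(0 : R), 1], continuous (horner p)}%classic.
  by apply: continuous_subspaceT; exact: continuous_horner.
have mu_between : Num.min p.[0] p.[1] <= mu <= Num.max p.[0] p.[1].
  by rewrite p0 p1 ge_min le_max mu_ge0 (ltW mu_lt) orbT.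
have [t] := IVT ler01 p_cont mu_between.
rewrite in_itv /= => /andP[t_ge0 t_le1] pt; exists t.
  rewrite t_le1 andbT lt_neqAle t_ge0 andbT.
  by apply: contraTneq mu_lt => t0; rewrite -pt -t0 p0 ltxx.
split; last by rewrite constrE.
by apply: checkerboard_mix; rewrite ?t_ge0.
Qed.

End IndependenceCopula.

Lemma feasible_P_RP (R : realType) n (mu : R) (Q : 'M[R]_n) :
  feasible_P mu Q -> feasible_RP mu Q.
Proof. by move=> [cbQ <-]. Qed.

Theorem lemma8 (R : realType) (n : nat) (mu : R) :
  (2 <= n)%N -> 0 <= mu -> mu <= 1 - n%:R^-1 ->
  forall P : 'M[R]_n, optimal_P mu P <-> optimal_RP mu P.
Proof.
move=> n_ge2 mu_ge0 _ P; have n_gt0 : (0 < n)%N by apply: leq_trans n_ge2.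
split=> [[feasP optP] | [[cbP mu_le] optP]].
  split=> [|Q [cbQ]]; first exact: feasible_P_RP.
  rewrite le_eqVlt => /predU1P[eqQ | ltQ]; first exact: optP.
  have [t t01 feas] := mix_constr_ivt n_gt0 cbQ mu_ge0 ltQ.
  apply: le_trans (optP _ feas) (Ient_mix_le n_gt0 _ cbQ).
  by case/andP: t01 => /ltW -> ->.
have active : constr P = mu.
  apply/eqP; rewrite eq_le mu_le andbT leNgt; apply/negP => ltP.
  have [t t01 feas] := mix_constr_ivt n_gt0 cbP mu_ge0 ltP.
  have PPi : P != Pi R n.
    by apply: contraTneq ltP => ->; rewrite constr_Pi // -leNgt.
  have := Ient_mix_lt n_gt0 t01 cbP PPi.
  by rewrite ltNge (optP _ (feasible_P_RP feas)).
split=> [|Q feasQ]; first by split.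
exact/optP/feasible_P_RP.
Qed.
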